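(* For every positive integer $B$, every max-min $B$-bounded space algorithm $ALG$ for the classic bin packing problem, and every positive integer $m$ with $m\ge 2B$ and $m$ divisible by $3$, there exists a sorted item sequence $I$ such that $OPT(I)=m$ and $ALG(I)\ge\frac{7}{6}\cdot OPT(I)-B$.
   Context: Classic bin packing: an item sequence $I=(a_1,\dots,a_n)\in(0,1]^n$ must be packed into bins of capacity $1$; $OPT(I)$ is the minimum number of non-empty bins, $ALG(I)$ the number of non-empty bins used by algorithm $ALG$. $I$ is sorted if $a_1\ge\cdots\ge a_n$. A max-min algorithm first sorts the input in non-increasing order and then repeatedly takes either the head (largest) or the tail (smallest) item of the currently remaining sorted sequence and packs it into a bin, each decision depending only on the items already packed and the current head and tail items, without seeing other remaining items. A bin is open if it contains an item and the algorithm may still pack items into it; closed bins never receive further items. A $B$-bounded space algorithm keeps at most $B$ open bins at any time. *)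

From HB Require Import structures.
From mathcomp Require Import all_boot all_order all_algebra.
From mathcomp Require Import reals.
Set Implicit Arguments. Unset Strict Implicit. Unset Printing Implicit Defensive.
Import Order.TTheory GRing.Theory Num.Theory.
Local Open Scope ring_scope.

Section BinPacking.
Variable R : realType.

Definition valid_items (I : seq R) : bool := all (fun x => (0 < x) && (x <= 1)) I.

Definition sorted_items (I : seq R) : bool := sorted (fun x y => y <= x) I.

Definition packable (I : seq R) (k : nat) : Prop :=
  exists f : 'I_(size I) -> 'I_k,
    forall j : 'I_k, \sum_(i < size I | f i == j) I`_i <= 1.

Definition is_OPT (I : seq R) (m : nat) : Prop :=
  packable I m /\ forall k, packable I k -> (m <= k)%N.

(* One decision of the algorithm: take the head (largest) or tail (smallest)
   remaining item; first close the bins with indices in [to_close]; then pack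
   the item into the open bin [Some i] or into a new bin [None]. *)
Record Step := mkStep { take_head : bool; to_close : seq nat; target : option nat }.

(* A configuration: list of bins (contents, is_open). *)
Definition Config := seq (seq R * bool).

(* A deterministic max-min algorithm: its decision depends only on the items
   already packed (with its own previous decisions) and the current head and
   tail items. *)
Definition maxmin_alg := seq (R * Step) -> R -> R -> Step.

Definition close_bins (cl : seq nat) (c : Config) : Config :=
  mkseq (fun i => let b := nth ([::], false) c i in
                  if i \in cl then (b.1, false) else b) (size c).

Definition place (x : R) (t : option nat) (c : Config) : option Config :=
  match t with
  | None => Some (rcons c ([:: x], true))
  | Some i =>
      let b := nth ([::], false) c i in
      if [&& (i < size c)%N, b.2 & \sum_(y <- b.1) y + x <= 1]
      then Some (set_nth ([::], false) c i (rcons b.1 x, true))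
      else None
  end.

Definition do_step (B : nat) (x : R) (s : Step) (c : Config) : option Config :=
  match place x (target s) (close_bins (to_close s) c) with
  | Some c' => if (count (fun b => b.2) c' <= B)%N then Some c' else None
  | None => None
  end.

Fixpoint run (alg : maxmin_alg) (B : nat) (n : nat) (rem : seq R)
    (hist : seq (R * Step)) (c : Config) : option Config :=
  match n with
  | 0%N => Some c
  | n'.+1 =>
    match rem with
    | [::] => Some c
    | h :: r =>
      let t := last h r in
      let s := alg hist h t in
      let x := if take_head s then h else t in
      let rem' := if take_head s then r else belast h r in
      match do_step B x s c with
      | None => None
      | Some c' => run alg B n' rem' (rcons hist (x, s)) c'
      end
    end
  end.

Definition pack (alg : maxmin_alg) (B : nat) (I : seq R) : option Config :=
  run alg B (size I) (sort (fun x y => y <= x) I) [::] [::].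

Definition bounded_space (alg : maxmin_alg) (B : nat) : Prop :=
  forall I : seq R, valid_items I -> pack alg B I <> None.

Definition ALG (alg : maxmin_alg) (B : nat) (I : seq R) : nat :=
  size (odflt [::] (pack alg B I)).

End BinPacking.

From HB Require Import structures.
From mathcomp Require Import all_boot all_order all_algebra.
From mathcomp Require Import reals.
From mathcomp Require Import lra zify.
Set Implicit Arguments. Unset Strict Implicit. Unset Printing Implicit Defensive.
Import Order.TTheory GRing.Theory Num.Theory.
Local Open Scope ring_scope.

(* The hard instance consists of m items of each of the sizes L = 0.52, M = 0.29
   and S = 0.19. Since L + M + S = 1, OPT = m, and no two large items share a bin.
   Give L, M and S the weights 4, 2 and 1: the input weighs 7m, while a feasible
   bin weighs at most 6 unless it holds one item of each size, in which case it
   weighs 7. A max-min algorithm always sees the remaining items as L^a M^k S^b,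
   so it can take a medium item only once a = 0 or b = 0. Until then no bin holds
   a medium item, so every bin that may still collect all three sizes is open,
   and there are at most B of them; afterwards no further bin can become such a
   bin, because the large or the small items are exhausted. *)

Lemma nseqSr (T : Type) n (y : T) : nseq n.+1 y = rcons (nseq n y) y.
Proof. by rewrite -addn1 nseqD cats1. Qed.

Section Packings.
Variable R : realType.

Lemma sort_sorted_items (I : seq R) : sorted_items I -> sort (fun x y => y <= x) I = I.
Proof. by move=> sorted_I; apply: (sorted_sort _ sorted_I); exact: ge_trans. Qed.

Lemma packable_large_prefix (I : seq R) n k : valid_items I -> (n <= size I)%N ->
  (forall i, (i < n)%N -> 1 / 2 < I`_i) -> packable I k -> (n <= k)%N.
Proof.
move=> valid_I le_n_I large [f fits].
have I_ge0 i : 0 <= I`_i.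
  case: (ltnP i (size I)) => [lt_i_I|le_I_i]; last by rewrite nth_default.
  by move: valid_I => /(all_nthP 0)/(_ i lt_i_I)/andP [/ltW].
pose w := widen_ord le_n_I.
have w_inj : injective w by move=> i1 i2 [/val_inj].
suff /leq_card : injective (f \o w) by rewrite !card_ord.
move=> i1 i2 /= same_bin; apply/eqP; apply: contraLR (fits (f (w i1))) => ne12.
rewrite -ltNge (bigD1 (w i1)) //= (bigD1 (w i2)) /=; last first.
  by rewrite -same_bin eqxx (inj_eq w_inj) eq_sym ne12.
have := large i1 (ltn_ord i1); have := large i2 (ltn_ord i2).
have : 0 <= \sum_(i | (f i == f (w i1)) && (i != w i1) && (i != w i2)) I`_i.
  by apply: sumr_ge0.
rewrite /=; lra.
Qed.

End Packings.

Section Configurations.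
Variable R : realType.
Implicit Types (x : R) (s : seq R) (c : Config R).

Definition packed c : seq R := flatten (map fst c).

Lemma packed_cons bn c : packed (bn :: c) = bn.1 ++ packed c.
Proof. by []. Qed.

Definition feasible s : bool := \sum_(y <- s) y <= 1.

Lemma map_fst_close_bins cl c : map fst (close_bins cl c) = map fst c.
Proof.
rewrite /close_bins; apply: (@eq_from_nth _ [::]); first by rewrite !size_map size_iota.
move=> i; rewrite size_map size_mkseq => lt_i_c.
rewrite (nth_map ([::], false)) ?size_mkseq // nth_mkseq //.
by rewrite (nth_map ([::], false)) //; case: ifP.
Qed.

Lemma count_close_bins (P : pred (seq R * bool)) cl c :
  (forall bn, P (bn.1, false) -> P bn) -> (count P (close_bins cl c) <= count P c)%N.
Proof.
move=> P_closed; rewrite /close_bins /mkseq count_map.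
rewrite -[in X in (_ <= X)%N](mkseq_nth ([::], false) c) /mkseq count_map.
by apply: sub_count => i /=; case: ifP => // _ /P_closed.
Qed.

Variant place_spec x : Config R -> Config R -> Prop :=
| PlaceNew c : place_spec x c (rcons c ([:: x], true))
| PlaceInto c1 s c2 : feasible (rcons s x) ->
    place_spec x (c1 ++ (s, true) :: c2) (c1 ++ (rcons s x, true) :: c2).

Lemma placeP x t c c' : place x t c = Some c' -> place_spec x c c'.
Proof.
case: t => [i|] /=; last by case=> <-; apply: PlaceNew.
case: ifP => // /and3P [lt_i_c open_i fits_i] [<-].
have {1}-> : c = take i c ++ nth ([::], false) c i :: drop i.+1 c.
  by rewrite -drop_nth // cat_take_drop.
rewrite set_nthE lt_i_c.
case: (nth _ c i) open_i fits_i => s o /= -> fits; apply: PlaceInto.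
by rewrite /feasible big_rcons.
Qed.

Lemma packed_place x t c c' : place x t c = Some c' -> perm_eq (packed c') (x :: packed c).
Proof.
case/placeP => [c0|c1 s c2 _]; apply/permP => p; rewrite /packed.
  by rewrite map_rcons flatten_rcons count_cat /= addn0 addnC.
by rewrite !map_cat !flatten_cat /= -cats1 !count_cat /= addn0; lia.
Qed.

Lemma feasible_place x t c c' : place x t c = Some c' -> x <= 1 ->
  all feasible (map fst c) -> all feasible (map fst c').
Proof.
case/placeP => [c0|c1 s c2 fits] x_le1.
  by rewrite map_rcons all_rcons /feasible big_seq1 x_le1.
by rewrite !map_cat !all_cat /= fits => /and3P [-> _ ->].
Qed.

Lemma count_place (P Q : pred (seq R * bool)) x t c c' :
  subpred P Q -> ~~ P ([:: x], true) -> (forall s, P (rcons s x, true) -> Q (s, true)) ->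
  place x t c = Some c' -> (count P c' <= count Q c)%N.
Proof.
move=> sub_PQ P_new P_placed /placeP [c0|c1 s c2 _].
  by rewrite -cats1 count_cat /= (negbTE P_new) !addn0 sub_count.
rewrite !count_cat /= leq_add ?sub_count // leq_add ?sub_count //.
by case: (P _) (P_placed s) => // /(_ isT) ->.
Qed.

End Configurations.

Arguments feasible {R} s.

Section Instance.
Variable R : realType.
Implicit Types (a k b : nat) (x t : R) (s : seq R) (c : Config R).

Definition itemL : R := 52 / 100.
Definition itemM : R := 29 / 100.
Definition itemS : R := 19 / 100.
Definition item_sizes : seq R := [:: itemL; itemM; itemS].

Lemma item_eqE :
  ((itemL == itemM) = false) * ((itemM == itemL) = false) * ((itemL == itemS) = false) *
  ((itemS == itemL) = false) * ((itemM == itemS) = false) * ((itemS == itemM) = false).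
Proof. by rewrite /itemL /itemM /itemS; do !split; apply/negbTE/eqP; lra. Qed.

Lemma item_sizes_valid t : t \in item_sizes -> (0 < t) && (t <= 1).
Proof.
by rewrite !inE => /or3P [] /eqP ->; rewrite /itemL /itemM /itemS; apply/andP; split; lra.
Qed.

Definition lms_items a k b : seq R := nseq a itemL ++ nseq k itemM ++ nseq b itemS.

Lemma lms_items_sizes a k b : all (fun y => y \in item_sizes) (lms_items a k b).
Proof. by rewrite /lms_items !all_cat !all_nseq !inE !eqxx !orbT. Qed.

Lemma size_lms_items a k b : size (lms_items a k b) = (a + k + b)%N.
Proof. by rewrite /lms_items !size_cat !size_nseq addnA. Qed.

Lemma nth_lms_items a k b i : (lms_items a k b)`_i =
  if (i < a)%N then itemL else if (i < a + k)%N then itemM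
  else if (i < a + k + b)%N then itemS else 0.
Proof.
rewrite /lms_items !nth_cat !size_nseq !nth_nseq.
case: ltnP => // le_a_i; rewrite -subnDA.
have -> : (i - a < k)%N = (i < a + k)%N by lia.
case: ltnP => // le_ak_i.
by have -> : (i - (a + k) < b)%N = (i < a + k + b)%N by lia.
Qed.

Lemma valid_lms_items a k b : valid_items (lms_items a k b).
Proof. by apply: sub_all (lms_items_sizes a k b) => t /item_sizes_valid. Qed.

Lemma sorted_lms_items a k b : sorted_items (lms_items a k b).
Proof.
have ge_nseq n y : pairwise (fun x y : R => y <= x) (nseq n y).
  by elim: n => //= n ->; rewrite all_nseq lexx orbT.
have ge_tr : transitive (fun x y : R => y <= x) by exact: ge_trans.
rewrite /sorted_items /lms_items (sorted_pairwise ge_tr) !pairwise_cat !ge_nseq.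
rewrite /allrel !all_nseq /= all_cat !all_nseq /itemL /itemM /itemS.
have [LM MS LS] : [/\ 29 / 100 <= 52 / 100 :> R, 19 / 100 <= 29 / 100 :> R
                    & 19 / 100 <= 52 / 100 :> R] by split; lra.
by rewrite LM MS LS !orbT.
Qed.

Lemma packable_lms_items m : (0 < m)%N -> packable (lms_items m m m) m.
Proof.
(* Bin j receives the items j, j + m and j + 2m. *)
move=> m_gt0; exists (fun i => Ordinal (ltn_pmod i m_gt0)) => j.
have block u lo hi : lo = (m * u)%N -> hi = (lo + m)%N ->
    \sum_(lo <= i < hi | (i %% m == j)%N) (lms_items m m m)`_i
    = (lms_items m m m)`_(j + m * u).
  move=> -> ->; rewrite -{1}[(m * u)%N]add0n big_addn addKn big_mkord.
  rewrite (big_pred1 j) // => i /=.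
  by rewrite addnC mulnC modnMDl modn_small.
rewrite -(big_mkord (fun i => (i %% m == j)%N) (fun i => (lms_items m m m)`_i)).
have -> : size (lms_items m m m) = (m * 2 + m)%N by rewrite size_lms_items; lia.
rewrite (@big_cat_nat _ _ _ (m * 2)) 1?(@big_cat_nat _ _ _ m); try lia.
rewrite (block 0%N 0%N m) 1?(block 1%N m (m * 2)%N) 1?(block 2%N (m * 2)%N (m * 2 + m)%N);
  try lia.
have lt_j_m := ltn_ord j.
rewrite !nth_lms_items.
have [-> -> ->] : [/\ j + m * 0 < m, j + m * 1 < m + m & j + m * 2 < m + m + m]%N.
  by split; lia.
have [-> -> ->] : [/\ (j + m * 1 < m)%N = false, (j + m * 2 < m)%N = false
                   & (j + m * 2 < m + m)%N = false] by split; lia.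
by change (itemL + itemM + itemS <= 1); rewrite /itemL /itemM /itemS; lra.
Qed.

Lemma is_OPT_lms_items m : (0 < m)%N -> is_OPT (lms_items m m m) m.
Proof.
move=> m_gt0; split=> [|k]; first exact: packable_lms_items.
apply: packable_large_prefix (valid_lms_items m m m) _ _.
  by rewrite size_lms_items -addnA leq_addr.
by move=> i lt_i_m; rewrite nth_lms_items lt_i_m /itemL; lra.
Qed.

(* A medium item is the head or the tail of the remaining items only when no
   large or no small item is left. *)
Inductive removes : nat -> nat -> nat -> R -> nat -> nat -> nat -> Prop :=
| RemoveL a k b : removes a.+1 k b itemL a k b
| RemoveM_front k b : removes 0 k.+1 b itemM 0 k b
| RemoveM_back a k : removes a k.+1 0 itemM a k 0
| RemoveS a k b : removes a k b.+1 itemS a k b.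

Lemma lms_items_take a k b h r (head : bool) : lms_items a k b = h :: r ->
  exists a' k' b', removes a k b (if head then h else last h r) a' k' b' /\
                   (if head then r else belast h r) = lms_items a' k' b'.
Proof.
rewrite /lms_items; case: head.
  case: a => [|a] /=; last by case=> <- <-; exists a, k, b; split; first exact: RemoveL.
  case: k => [|k] /=.
    by case: b => [|b] //= [<- <-]; exists 0%N, 0%N, b; split; first exact: RemoveS.
  by case=> <- <-; exists 0%N, k, b; split; first exact: RemoveM_front.
rewrite lastI.
case: b => [|b]; last first.
  rewrite nseqSr -!rcons_cat => /rcons_inj [<- <-].
  by exists a, k, b; split => //; apply: RemoveS.
case: k => [|k]; last first.
  rewrite cats0 nseqSr -rcons_cat => /rcons_inj [<- <-].
  by exists a, k, 0%N; rewrite cats0; split => //; apply: RemoveM_back.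
case: a => [|a]; first by move=> /(congr1 size); rewrite size_rcons.
rewrite !cats0 nseqSr => /rcons_inj [<- <-].
by exists a, 0%N, 0%N; rewrite !cats0; split => //; apply: RemoveL.
Qed.

Lemma removes_size a k b x a' k' b' : removes a k b x a' k' b' ->
  (a' + k' + b').+1 = (a + k + b)%N.
Proof. by case=> *; lia. Qed.

Lemma removes_le a k b x a' k' b' : removes a k b x a' k' b' ->
  [/\ a' <= a, k' <= k & b' <= b]%N.
Proof. by case=> *; split; lia. Qed.

Lemma removes_mem a k b x a' k' b' : removes a k b x a' k' b' -> x \in item_sizes.
Proof. by case=> *; rewrite !inE eqxx ?orbT. Qed.

Lemma removes_perm a k b x a' k' b' : removes a k b x a' k' b' ->
  perm_eq (lms_items a k b) (x :: lms_items a' k' b').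
Proof.
by case=> *; rewrite /lms_items ?cats0 // nseqSr -?rcons_cat perm_rcons.
Qed.

Lemma removes_interior a k b x a' k' b' : removes a k b x a' k' b' ->
  (0 < a)%N -> (0 < b)%N -> x != itemM.
Proof. by case=> *; rewrite ?item_eqE. Qed.

Definition has_all_sizes s : bool := all (fun t => t \in s) item_sizes.

Definition available a k b t : bool :=
  [|| (t == itemL) && (0 < a)%N, (t == itemM) && (0 < k)%N | (t == itemS) && (0 < b)%N].

Definition completable a k b (bn : seq R * bool) : bool :=
  has_all_sizes bn.1 || bn.2 && all (fun t => (t \in bn.1) || available a k b t) item_sizes.

Lemma available_mono a k b a' k' b' t : (a' <= a)%N -> (k' <= k)%N -> (b' <= b)%N ->
  available a' k' b' t -> available a k b t.
Proof.
rewrite /available => le_a le_k le_b /or3P [] /andP [-> pos].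
- by rewrite (leq_trans pos le_a).
- by rewrite (leq_trans pos le_k) orbT.
- by rewrite (leq_trans pos le_b) !orbT.
Qed.

Lemma completable_mono a k b a' k' b' bn : (a' <= a)%N -> (k' <= k)%N -> (b' <= b)%N ->
  completable a' k' b' bn -> completable a k b bn.
Proof.
rewrite /completable => le_a le_k le_b /orP [-> //| /andP [-> /allP complete]].
apply/orP; right; apply/allP => t /complete /orP [-> //| avail].
by rewrite (available_mono le_a le_k le_b avail) orbT.
Qed.

Lemma removes_available a k b x a' k' b' : removes a k b x a' k' b' -> available a k b x.
Proof. by case=> *; rewrite /available eqxx ?orbT. Qed.

Lemma completable_rcons a k b x a' k' b' s : removes a k b x a' k' b' ->
  completable a' k' b' (rcons s x, true) -> completable a k b (s, true).
Proof.
move=> rem_x compl_x; apply/orP; right; apply/allP => t t_size.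
have [le_a le_k le_b] := removes_le rem_x.
have : (t \in rcons s x) || available a' k' b' t.
  by case/orP: compl_x => [/allP/(_ t t_size) -> | /andP [_ /allP/(_ t t_size)]].
rewrite mem_rcons inE -orbA => /or3P [/eqP -> | -> // | avail].
  by rewrite (removes_available rem_x) orbT.
by rewrite (available_mono le_a le_k le_b avail) orbT.
Qed.

Lemma completable_new a k b x a' k' b' : removes a k b x a' k' b' ->
  (a == 0)%N || (b == 0)%N -> ~~ completable a' k' b' ([:: x], true).
Proof.
case=> [a0 k0 b0 /= /eqP ->|k0 b0 _|a0 k0 _|a0 k0 b0 /orP [/eqP -> | //]];
  by rewrite /completable /has_all_sizes /available /= !inE ?eqxx ?item_eqE ?andbF.
Qed.

Lemma completable_closed a k b bn : completable a k b (bn.1, false) -> completable a k b bn.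
Proof. by rewrite /completable /= orbF => ->. Qed.

Lemma completable_exhausted bn : completable 0 0 0 bn = has_all_sizes bn.1.
Proof.
rewrite /completable /has_all_sizes /available /= !andbF !orbF.
by case: (itemL \in _); case: (itemM \in _); case: (itemS \in _); rewrite /= ?andbF.
Qed.

Lemma count_completable_open a k b c : itemM \notin packed c ->
  (count (completable a k b) c <= count (fun bn => bn.2) c)%N.
Proof.
elim: c => //= [[s o] c IH]; rewrite packed_cons /= mem_cat negb_or => /andP [M_s M_c].
have not_LMS : ~~ has_all_sizes s by apply: contra M_s => /allP; apply; rewrite !inE eqxx orbT.
rewrite leq_add ?IH // /completable; case: o => /=; first exact: leq_b1.
by rewrite orbF (negbTE not_LMS).
Qed.

Lemma count_completable_place a k b x a' k' b' dst cl c c' :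
  removes a k b x a' k' b' -> (a == 0)%N || (b == 0)%N ->
  place x dst (close_bins cl c) = Some c' ->
  (count (completable a' k' b') c' <= count (completable a k b) c)%N.
Proof.
move=> rem_x exhausted place_c; have [le_a le_k le_b] := removes_le rem_x.
apply: leq_trans (count_close_bins _ _ (@completable_closed a k b)).
apply: count_place place_c.
- by move=> bn; apply: completable_mono.
- exact: completable_new rem_x exhausted.
- by move=> s; apply: completable_rcons rem_x.
Qed.

Definition weight s : nat :=
  4 * count_mem itemL s + 2 * count_mem itemM s + count_mem itemS s.

Lemma weight_cat s1 s2 : weight (s1 ++ s2) = (weight s1 + weight s2)%N.
Proof. by rewrite /weight !count_cat; lia. Qed.

Lemma weight_lms_items a k b : weight (lms_items a k b) = (4 * a + 2 * k + b)%N.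
Proof. by rewrite /weight /lms_items !count_cat !count_nseq /= !eqxx !item_eqE; lia. Qed.

Lemma sum_item_sizes s : all (fun y => y \in item_sizes) s ->
  \sum_(y <- s) y = (count_mem itemL s)%:R * itemL + (count_mem itemM s)%:R * itemM
                    + (count_mem itemS s)%:R * itemS.
Proof.
elim: s => [|y s IH]; first by rewrite big_nil !mul0r !addr0.
rewrite /= big_cons => /andP [y_size /IH ->].
by move: y_size; rewrite !inE => /or3P [] /eqP ->; rewrite eqxx !item_eqE /= !natrD; lra.
Qed.

Lemma weight_feasible s : all (fun y => y \in item_sizes) s -> feasible s ->
  (weight s <= 6 + has_all_sizes s)%N.
Proof.
move=> s_sizes; rewrite /feasible sum_item_sizes // /has_all_sizes /= -!has_pred1 !has_count.
rewrite /weight andbT.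
move: (count_mem itemL s) (count_mem itemM s) (count_mem itemS s) => l md sm fits.
have {fits} : (l * 52 + md * 29 + sm * 19 <= 100)%N.
  by rewrite -(ler_nat R) !natrD !natrM; move: fits; rewrite /itemL /itemM /itemS; lra.
by case: l md sm => [|l] [|md] [|sm] /=; lia.
Qed.

Lemma weight_packed c : all (fun y => y \in item_sizes) (packed c) ->
  all feasible (map fst c) ->
  (weight (packed c) <= 6 * size c + count (fun bn => has_all_sizes bn.1) c)%N.
Proof.
elim: c => [|bn c IH]; first by rewrite /packed /weight.
rewrite packed_cons /= all_cat weight_cat => /andP [bn_sizes /IH IHc] /andP [bn_fits /IHc].
by have := weight_feasible bn_sizes bn_fits; lia.
Qed.

End Instance.

Arguments itemL {R}.
Arguments itemM {R}.
Arguments itemS {R}.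
Arguments item_sizes {R}.
Arguments lms_items {R}.

Section Run.
Variables (R : realType) (alg : maxmin_alg R) (m B : nat).
Implicit Types (a k b : nat) (c : Config R).

Definition packing_inv a k b c : Prop :=
  [/\ perm_eq (packed c ++ lms_items a k b) (lms_items m m m),
      all feasible (map fst c),
      (0 < a)%N -> (0 < b)%N -> itemM \notin packed c &
      (count (completable a k b) c <= B)%N].

Lemma packing_inv_step a k b x a' k' b' s c c' :
  packing_inv a k b c -> removes a k b x a' k' b' -> do_step B x s c = Some c' ->
  packing_inv a' k' b' c'.
Proof.
move=> [perm_c fits_c no_M completable_c] rem_x.
rewrite /do_step; case place_c: place => [c''|] //; case: ifP => // open_c'' [<-].
have packed_c'' : perm_eq (packed c'') (x :: packed c).
  by have := packed_place place_c; rewrite /packed map_fst_close_bins.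
have [le_a _ le_b] := removes_le rem_x.
have no_M'' : (0 < a)%N -> (0 < b)%N -> itemM \notin packed c''.
  move=> a_gt0 b_gt0; rewrite (perm_mem packed_c'') in_cons negb_or no_M // andbT.
  by rewrite eq_sym (removes_interior rem_x).
split.
- apply: perm_trans perm_c; apply/permP => p.
  move: (permP packed_c'' p) (permP (removes_perm rem_x) p) => /= packed_p lms_p.
  by rewrite count_cat [RHS]count_cat packed_p lms_p addnCA addnA.
- apply: feasible_place place_c _ _; last by rewrite map_fst_close_bins.
  by have /andP [] := item_sizes_valid (removes_mem rem_x).
- by move=> a'_gt0 b'_gt0; apply: no_M''; [apply: leq_trans le_a | apply: leq_trans le_b].
have [/andP [a_gt0 b_gt0] | exhausted] := boolP ((0 < a) && (0 < b))%N.
  exact: leq_trans (count_completable_open _ _ _ (no_M'' a_gt0 b_gt0)) open_c''.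
rewrite negb_and -!eqn0Ngt in exhausted.
exact: leq_trans (count_completable_place rem_x exhausted place_c) completable_c.
Qed.

Lemma packing_inv_run n a k b hist c c' :
  run alg B n (lms_items a k b) hist c = Some c' -> (a + k + b <= n)%N ->
  packing_inv a k b c -> packing_inv 0 0 0 c'.
Proof.
have exhausted a0 k0 b0 c0 : (a0 + k0 + b0 = 0)%N ->
    packing_inv a0 k0 b0 c0 -> packing_inv 0 0 0 c0.
  by move=> sum0; have [-> -> ->] : [/\ a0 = 0, k0 = 0 & b0 = 0]%N by split; lia.
elim: n a k b hist c => [|n IH] a k b hist c /=.
  by case=> <- size0; apply: exhausted; lia.
case lms_akb: (lms_items a k b) => [|h r].
  by case=> <- _; apply: exhausted; rewrite -(size_lms_items R) lms_akb.
have [a' [k' [b' [rem_x ->]]]] := lms_items_take (take_head (alg hist h (last h r))) lms_akb.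
case step: do_step => [c1|] // run_c1 size_akb inv_c.
apply: IH run_c1 _ (packing_inv_step inv_c rem_x step).
by have := removes_size rem_x; lia.
Qed.

Lemma packing_inv_final c : packing_inv 0 0 0 c -> (7 * m <= 6 * size c + B)%N.
Proof.
rewrite /packing_inv cats0 => -[perm_c fits_c _ completable_c].
have sizes_c : all (fun y => y \in item_sizes) (packed c).
  by rewrite (perm_all _ perm_c) lms_items_sizes.
have := weight_packed sizes_c fits_c.
have -> : weight (packed c) = weight (lms_items m m m : seq R).
  by move/permP: perm_c => same_count; rewrite /weight !same_count.
rewrite weight_lms_items -(eq_count (@completable_exhausted _)).
lia.
Qed.

End Run.

Theorem theorem3 (R : realType) (B : nat) (alg : maxmin_alg R) (m : nat) :
  (0 < B)%N -> bounded_space alg B -> (0 < m)%N -> (2 * B <= m)%N -> (3 %| m)%N ->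
  exists I : seq R,
    [/\ valid_items I, sorted_items I, is_OPT I m &
        7 / 6 * m%:R - B%:R <= (ALG alg B I)%:R :> R].
Proof.
move=> _ alg_ok m_gt0 _ _; exists (lms_items m m m).
split; [exact: valid_lms_items | exact: sorted_lms_items | exact: is_OPT_lms_items |].
have := alg_ok _ (valid_lms_items R m m m).
rewrite /ALG /pack sort_sorted_items ?sorted_lms_items //.
case run_c: run => [c|] // _ /=.
have inv0 : packing_inv m B m m m ([::] : Config R) by split.
have /packing_inv_final : packing_inv m B 0 0 0 c.
  by apply: packing_inv_run run_c _ inv0; rewrite size_lms_items.
rewrite -(ler_nat R) natrD !natrM.
have := ler0n R B; lra.
Qed.
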